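(* In $NOM$, writing $\phi\vee\psi$ for $\neg(\neg\phi\wedge\neg\psi)$ and $\phi\perp\!\!\!\perp\psi$ for $(\phi\rightarrow(\psi\rightarrow\phi))\wedge(\psi\rightarrow(\phi\rightarrow\psi))$, the following rule is derivable for every finite sequence $\Gamma$ and formulas $\phi,\psi$: from $\Gamma\vdash((\phi\wedge\psi)\vee(\phi\wedge\neg\psi))\vee((\neg\phi\wedge\psi)\vee(\neg\phi\wedge\neg\psi))$ infer $\Gamma\vdash\phi\perp\!\!\!\perp\psi$.
   Context: The propositional deductive system $NOM$: formulas are built from propositional letters using $\wedge$, $\rightarrow$, $\neg$. Sequents are $\phi_1,\ldots,\phi_n\vdash\psi$ ($n\ge0$) with antecedent a finite ordered sequence. With $\Gamma$ a finite possibly empty sequence of formulas and $\phi,\psi,\chi$ formulas, the rules of $NOM$ are: (assumption) $\Gamma,\phi\vdash\phi$; (cut) $\Gamma\vdash\phi$, $\Gamma,\phi\vdash\psi$ $\Rightarrow$ $\Gamma\vdash\psi$; (paste) $\Gamma\vdash\phi$, $\Gamma\vdash\psi$ $\Rightarrow$ $\Gamma,\phi\vdash\psi$; (compatible exchange) $\Gamma,\phi,\psi\vdash\phi$, $\Gamma,\phi,\psi\vdash\chi$, $\Gamma,\psi,\phi\vdash\psi$ $\Rightarrow$ $\Gamma,\psi,\phi\vdash\chi$; ($\wedge$-intro) $\Gamma\vdash\phi$, $\Gamma\vdash\psi$ $\Rightarrow$ $\Gamma\vdash\phi\wedge\psi$; ($\wedge$-elim) $\Gamma\vdash\phi\wedge\psi$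 $\Rightarrow$ $\Gamma\vdash\phi$ and $\Rightarrow$ $\Gamma\vdash\psi$; ($\rightarrow$-intro) $\Gamma,\phi\vdash\psi$ $\Rightarrow$ $\Gamma\vdash\phi\rightarrow\psi$; ($\rightarrow$-elim) $\Gamma\vdash\phi\rightarrow\psi$ $\Rightarrow$ $\Gamma,\phi\vdash\psi$; (excluded middle) $\Gamma,\phi\vdash\psi$, $\Gamma,\neg\phi\vdash\psi$ $\Rightarrow$ $\Gamma\vdash\psi$; (explosion) $\Gamma\vdash\neg\phi$ $\Rightarrow$ $\Gamma,\phi\vdash\psi$. A rule schema is derivable if in every instance its conclusion can be derived from its premises using these rules. *)

From Stdlib Require Import List.
Import ListNotations.

Inductive form : Type :=
| Var : nat -> form
| And : form -> form -> form
| Imp : form -> form -> form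
| Neg : form -> form.

(* A sequent phi_1,...,phi_n |- psi: antecedent is an ordered list;
   "Gamma, phi" is Gamma ++ [phi]. *)
Record sequent : Type := Seq { ante : list form; succ : form }.

Inductive derives (H : sequent -> Prop) : sequent -> Prop :=
| d_prem : forall s, H s -> derives H s
| d_assum : forall G p, derives H (Seq (G ++ [p]) p)
| d_cut : forall G p q,
    derives H (Seq G p) -> derives H (Seq (G ++ [p]) q) -> derives H (Seq G q)
| d_paste : forall G p q,
    derives H (Seq G p) -> derives H (Seq G q) -> derives H (Seq (G ++ [p]) q)
| d_cexch : forall G p q r,
    derives H (Seq (G ++ [p; q]) p) ->
    derives H (Seq (G ++ [p; q]) r) ->
    derives H (Seq (G ++ [q; p]) q) ->
    derives H (Seq (G ++ [q; p]) r)
| d_andI : forall G p q,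
    derives H (Seq G p) -> derives H (Seq G q) -> derives H (Seq G (And p q))
| d_andE1 : forall G p q, derives H (Seq G (And p q)) -> derives H (Seq G p)
| d_andE2 : forall G p q, derives H (Seq G (And p q)) -> derives H (Seq G q)
| d_impI : forall G p q, derives H (Seq (G ++ [p]) q) -> derives H (Seq G (Imp p q))
| d_impE : forall G p q, derives H (Seq G (Imp p q)) -> derives H (Seq (G ++ [p]) q)
| d_em : forall G p q,
    derives H (Seq (G ++ [p]) q) -> derives H (Seq (G ++ [Neg p]) q) -> derives H (Seq G q)
| d_expl : forall G p q, derives H (Seq G (Neg p)) -> derives H (Seq (G ++ [p]) q).

Definition Or (p q : form) : form := Neg (And (Neg p) (Neg q)).
Definition Indep (p q : form) : form :=
  And (Imp p (Imp q p)) (Imp q (Imp p q)).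

(** Contexts of NOM are ordered and admit neither weakening nor exchange, so
    the classical case analysis on a disjunction is not available.  It is
    recovered when the disjuncts are exclusive, i.e. whichever one is the last
    hypothesis refutes the other.  The key tool is compatible exchange: an
    inconsistent context [G, a] stays inconsistent when a hypothesis [b] is
    inserted before [a], provided [G, b, a] still derives [b].  With it one
    shows that [G, ~a, ~b] is inconsistent once [G] derives [a \/ b] and [a],
    [b] are exclusive.  The four conjunctions of the hypothesis are pairwise
    exclusive, being separated by [p] or by [q], so one may argue by cases;
    in each case both [p] and [q] are derived or refuted by the context, and
    that directly gives [p ⊥⊥ q]. *)

From Stdlib Require Import List.
Import ListNotations.

Section NOM.

Context {H : sequent -> Prop}.

Local Notation "G ⊢ p" := (derives H (Seq G p)) (at level 70).

Definition inconsistent (G : list form) : Prop := forall r, G ⊢ r.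

Definition decided (G : list form) (p : form) : Prop := G ⊢ p \/ G ⊢ Neg p.

Definition exclusive (a b : form) : Prop := forall S, S ++ [a] ⊢ Neg b.

Lemma cexch_snoc G a b r :
  (G ++ [a]) ++ [b] ⊢ a -> (G ++ [a]) ++ [b] ⊢ r ->
  (G ++ [b]) ++ [a] ⊢ b -> (G ++ [b]) ++ [a] ⊢ r.
Proof. rewrite <- !app_assoc. apply d_cexch. Qed.

Lemma last_and_l S a b : S ++ [And a b] ⊢ a.
Proof. apply d_andE1 with b. apply d_assum. Qed.

Lemma last_and_r S a b : S ++ [And a b] ⊢ b.
Proof. apply d_andE2 with a. apply d_assum. Qed.

Lemma modus_ponens G p q : G ⊢ Imp p q -> G ⊢ p -> G ⊢ q.
Proof. intros hpq hp. apply d_cut with p; [exact hp | apply d_impE, hpq]. Qed.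

Lemma inconsistent_of_neg G p : G ⊢ Neg p -> inconsistent (G ++ [p]).
Proof. intros hp r. apply d_expl, hp. Qed.

Lemma inconsistent_snoc G x : inconsistent G -> inconsistent (G ++ [x]).
Proof. intro hG. apply inconsistent_of_neg, hG. Qed.

Lemma neg_intro G a : inconsistent (G ++ [a]) -> G ⊢ Neg a.
Proof. intro ha. apply d_em with a; [apply ha | apply d_assum]. Qed.

Lemma inconsistent_insert G a b :
  inconsistent (G ++ [a]) -> (G ++ [b]) ++ [a] ⊢ b ->
  inconsistent ((G ++ [b]) ++ [a]).
Proof.
  intros ha hb r.
  apply cexch_snoc; [apply inconsistent_snoc, ha .. | exact hb].
Qed.

Lemma inconsistent_cut G a b :
  inconsistent (G ++ [a]) -> G ++ [b] ⊢ a -> inconsistent (G ++ [b]).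
Proof.
  intros ha hb r. apply d_cut with a; [exact hb |].
  apply inconsistent_insert; [exact ha |].
  apply d_paste; [exact hb | apply d_assum].
Qed.

Lemma neg_neg_elim S p : S ++ [Neg (Neg p)] ⊢ p.
Proof.
  apply d_em with p; [apply d_assum | apply d_expl, d_assum].
Qed.

Lemma imp_neg_neg S p : S ⊢ Imp p (Neg (Neg p)).
Proof.
  apply d_em with (Neg p); apply d_impI.
  - apply d_expl, d_assum.
  - apply d_paste; [apply neg_neg_elim | apply d_assum].
Qed.

Lemma inconsistent_snoc_neg G p : G ⊢ p -> inconsistent (G ++ [Neg p]).
Proof.
  intro hp. apply inconsistent_of_neg, modus_ponens with p; [apply imp_neg_neg | exact hp].
Qed.

Lemma exclusive_of_separating a b x :
  (forall S, S ++ [a] ⊢ x) -> (forall S, S ++ [b] ⊢ Neg x) -> exclusive a b.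
Proof.
  intros ha hb S. apply neg_intro, inconsistent_cut with (Neg x).
  - apply inconsistent_snoc_neg, ha.
  - apply hb.
Qed.

Lemma exclusive_and_neg_r a b q : exclusive (And a q) (And b (Neg q)).
Proof. apply exclusive_of_separating with q; intro; apply last_and_r. Qed.

Lemma exclusive_neg_snoc G a b :
  exclusive a b -> G ⊢ Neg a -> G ++ [Neg b] ⊢ Neg a.
Proof.
  intros hab ha. apply d_em with a; [| apply d_assum].
  apply inconsistent_insert; [apply inconsistent_of_neg, ha | apply hab].
Qed.

Lemma inconsistent_of_or_exclusive D a b :
  exclusive a b -> D ⊢ Or a b -> inconsistent ((D ++ [Neg a]) ++ [Neg b]).
Proof.
  intros hab hor.
  set (e := And (Neg a) (Neg b)).
  assert (hDe : inconsistent ((D ++ [Neg a]) ++ [e])).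
  { apply inconsistent_insert; [apply inconsistent_of_neg, hor | apply last_and_l]. }
  apply inconsistent_cut with e; [exact hDe |].
  apply d_andI; [apply exclusive_neg_snoc, d_assum; exact hab | apply d_assum].
Qed.

Lemma or_elim_exclusive D a b X :
  exclusive a b -> D ⊢ Or a b ->
  D ++ [a] ⊢ X -> (D ++ [Neg a]) ++ [b] ⊢ X -> D ⊢ X.
Proof.
  intros hab hor ha hb.
  apply d_em with a; [exact ha |].
  apply d_em with b; [exact hb |].
  apply inconsistent_of_or_exclusive; assumption.
Qed.

Lemma or_snoc_exclusive a b x :
  exclusive a b -> (forall S, S ++ [a] ⊢ x) -> (forall S, S ++ [b] ⊢ x) ->
  forall S, S ++ [Or a b] ⊢ x.
Proof.
  intros hab ha hb S.
  apply or_elim_exclusive with a b; [exact hab | apply d_assum | apply ha | apply hb].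
Qed.

Lemma imp_imp_of_decided G p q :
  decided G p -> decided G q -> G ⊢ Imp p (Imp q p).
Proof.
  intros [hp | hnp] hq; apply d_impI; [apply d_impI | apply d_expl, hnp].
  destruct hq as [hq | hnq].
  - apply d_paste; [apply d_paste | apply d_assum]; assumption.
  - apply d_expl, d_paste; assumption.
Qed.

Lemma indep_of_decided G p q : decided G p -> decided G q -> G ⊢ Indep p q.
Proof. intros hp hq. apply d_andI; apply imp_imp_of_decided; assumption. Qed.

Lemma indep_of_four_cases G p q :
  G ⊢ Or (Or (And p q) (And p (Neg q)))
         (Or (And (Neg p) q) (And (Neg p) (Neg q))) ->
  G ⊢ Indep p q.
Proof.
  set (A := Or (And p q) (And p (Neg q))).
  set (B := Or (And (Neg p) q) (And (Neg p) (Neg q))).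
  intro hG.
  assert (hAB : exclusive A B).
  { apply exclusive_of_separating with p; apply or_snoc_exclusive;
      solve [apply exclusive_and_neg_r | intro; apply last_and_l]. }
  assert (hA : forall S, S ++ [A] ⊢ Indep p q).
  { apply or_snoc_exclusive; [apply exclusive_and_neg_r | intro S ..];
      apply indep_of_decided; [left | left | left | right];
      first [apply last_and_l | apply last_and_r]. }
  assert (hB : forall S, S ++ [B] ⊢ Indep p q).
  { apply or_snoc_exclusive; [apply exclusive_and_neg_r | intro S ..];
      apply indep_of_decided; [right | left | right | right];
      first [apply last_and_l | apply last_and_r]. }
  apply or_elim_exclusive with A B; [exact hAB | exact hG | apply hA | apply hB].
Qed.

End NOM.

Theorem proposition4p14 :
  forall (G : list form) (p q : form),
    derives
      (fun s => s = Seq G (Or (Or (And p q) (And p (Neg q)))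
                              (Or (And (Neg p) q) (And (Neg p) (Neg q)))))
      (Seq G (Indep p q)).
Proof.
  intros G p q. apply indep_of_four_cases, d_prem. reflexivity.
Qed.
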